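(* Let $(X,\mathcal U)$ be a $\Delta$-rotund quasi-uniform space (respectively, a $\Delta$-rotund uniform space), with $X$ carrying the topology $\tau_{\mathcal U}$. Then for every entourage $U\in\mathcal U$ there is a right-continuous $\mathcal U$-uniform quasi-pseudometric (respectively, pseudometric) $p:X\times X\to[0,1]$ such that $B_p(x,1)\subset\overline{B(x;U)}^\circ$ for every $x\in X$.
   Context: Entourages, $U\circ V$, $U^{-1}$, $B(x;U)=\{y:(x,y)\in U\}$. A quasi-uniformity on $X$ is a family $\mathcal U$ of subsets of $X\times X$ containing the diagonal, closed under supersets, any two members containing a common member, and such that for each $U\in\mathcal U$ some $V\in\mathcal U$ has $V\circ V\subset U$; it is a uniformity if moreover $U^{-1}\in\mathcal U$ for all $U\in\mathcal U$. Its topology $\tau_{\mathcal U}$: $W$ is open iff for every $x\in W$ some $U\in\mathcal U$ satisfies $B(x;U)\subset W$. $\overline S^\circ$ denotes the interior of the closure. A base $\mathcal B\subset\mathcal U$ (every member of $\mathcal U$ contains one from $\mathcal B$) is multiplicative if closed under $\circ$, and $\Delta$-rotund if $B(\overline{B(x;V)};U)\subset\overline{B(x;V\circ W\circ U)}$ for all $x\in X$, $U,V,W\in\mathcal B$ (where $B(A;U)=\bigcup_{a\in A}B(a;U)$). $(X,\mathcal U)$ is $\Delta$-rotund if $\mathcal U$ has a $\Delta$-rotund multiplicative base. A premetric $p$ ($p(x,x)=0$) is $\mathcal U$-uniform if $\{(x,y):p(x,y)<\varepsilon\}\in\mathcal U$ for every $\varepsilon>0$; right-continuous if $y\mapsto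 p(x,y)$ is continuous for each $x$; a quasi-pseudometric satisfies the triangle inequality; a pseudometric is a symmetric quasi-pseudometric. $B_p(x,1)=\{y:p(x,y)<1\}$. *)

From Stdlib Require Import Reals.
Open Scope R_scope.

Definition rel (X : Type) := X -> X -> Prop.

Definition rcomp {X : Type} (U V : rel X) : rel X :=
  fun x z => exists y, U x y /\ V y z.

Definition rinv {X : Type} (U : rel X) : rel X := fun x y => U y x.

Definition ball {X : Type} (x : X) (U : rel X) : X -> Prop := fun y => U x y.

Definition ballS {X : Type} (A : X -> Prop) (U : rel X) : X -> Prop :=
  fun y => exists a, A a /\ U a y.

Definition subset {X : Type} (A B : X -> Prop) : Prop := forall x, A x -> B x.

Definition rsubset {X : Type} (U V : rel X) : Prop := forall x y, U x y -> V x y.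

Definition is_quasi_uniformity {X : Type} (UU : rel X -> Prop) : Prop :=
  (forall U, UU U -> forall x, U x x) /\
  (forall U V, UU U -> rsubset U V -> UU V) /\
  (forall U V, UU U -> UU V -> exists W, UU W /\ rsubset W U /\ rsubset W V) /\
  (forall U, UU U -> exists V, UU V /\ rsubset (rcomp V V) U).

Definition is_uniformity {X : Type} (UU : rel X -> Prop) : Prop :=
  is_quasi_uniformity UU /\ (forall U, UU U -> UU (rinv U)).

Definition uopen {X : Type} (UU : rel X -> Prop) (W : X -> Prop) : Prop :=
  forall x, W x -> exists U, UU U /\ subset (ball x U) W.

Definition uclosure {X : Type} (UU : rel X -> Prop) (S : X -> Prop) : X -> Prop :=
  fun x => forall W, uopen UU W -> W x -> exists y, W y /\ S y.

Definition uinterior {X : Type} (UU : rel X -> Prop) (S : X -> Prop) : X -> Prop :=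
  fun x => exists W, uopen UU W /\ W x /\ subset W S.

Definition is_base {X : Type} (UU : rel X -> Prop) (BB : rel X -> Prop) : Prop :=
  (forall U, BB U -> UU U) /\
  (forall U, UU U -> exists V, BB V /\ rsubset V U).

Definition multiplicative {X : Type} (BB : rel X -> Prop) : Prop :=
  forall U V, BB U -> BB V -> BB (rcomp U V).

Definition delta_rotund_base {X : Type} (UU : rel X -> Prop) (BB : rel X -> Prop) : Prop :=
  forall x U V W, BB U -> BB V -> BB W ->
    subset (ballS (uclosure UU (ball x V)) U)
           (uclosure UU (ball x (rcomp (rcomp V W) U))).

Definition delta_rotund {X : Type} (UU : rel X -> Prop) : Prop :=
  exists BB, is_base UU BB /\ multiplicative BB /\ delta_rotund_base UU BB.

Definition premetric {X : Type} (p : X -> X -> R) : Prop := forall x, p x x = 0.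

Definition uniform_premetric {X : Type} (UU : rel X -> Prop) (p : X -> X -> R) : Prop :=
  forall eps, 0 < eps -> UU (fun x y => p x y < eps).

Definition R_open (O : R -> Prop) : Prop :=
  forall r, O r -> exists e, 0 < e /\ forall s, Rabs (s - r) < e -> O s.

Definition ucontinuous {X : Type} (UU : rel X -> Prop) (f : X -> R) : Prop :=
  forall O, R_open O -> uopen UU (fun y => O (f y)).

Definition right_continuous {X : Type} (UU : rel X -> Prop) (p : X -> X -> R) : Prop :=
  forall x, ucontinuous UU (p x).

Definition quasi_pseudometric {X : Type} (p : X -> X -> R) : Prop :=
  premetric p /\ forall x y z, p x z <= p x y + p y z.

Definition pseudometric {X : Type} (p : X -> X -> R) : Prop :=
  quasi_pseudometric p /\ forall x y, p x y = p y x.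

Definition unit_valued {X : Type} (p : X -> X -> R) : Prop :=
  forall x y, 0 <= p x y <= 1.

Definition pball1 {X : Type} (p : X -> X -> R) (x : X) : X -> Prop :=
  fun y => p x y < 1.

From Stdlib Require Import Reals ZArith Lra Lia Classical ClassicalEpsilon.
Open Scope R_scope.

(* Take base entourages V_n with V_0 ⊆ U and V_(n+1) ∘ V_(n+1) ⊆ V_n, and compose them
   along binary expansions into entourages E(r), r dyadic in (0,1], increasing in r,
   with E(r) ∘ V_n ⊆ E(r + 2^-n) and E(1) = V_0.  Let g(x,y) be the infimum of the r
   with y ∈ cl B(x; E(r)) (or 1).  Δ-rotundity lets the closure pass through one more
   composition, so g(z,b) ≤ g(z,a) + 3·2^-m whenever (a,b) ∈ V_m, and g(z,·) is lower
   semicontinuous since its sublevel sets are intersections of closed sets.  Then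
   p(x,y) = sup_z max(0, g(z,y) - g(z,x)) is a U-uniform quasi-pseudometric, right
   continuous because g(z,·) is, and p(x,y) < 1 gives g(x,y) < 1, so y lies in the
   open set {g(x,·) < 1} ⊆ cl B(x;U).  In a uniform space |g(z,y) - g(z,x)| instead
   gives a pseudometric. *)

Definition supR (S : R -> Prop) : R := epsilon (inhabits 0) (is_lub S).

Definition is_glb (S : R -> Prop) (m : R) : Prop :=
  (forall r, S r -> m <= r) /\ (forall c, (forall r, S r -> c <= r) -> c <= m).

Definition infR (S : R -> Prop) : R := epsilon (inhabits 0) (is_glb S).

Lemma supR_is_lub S r0 b : S r0 -> (forall r, S r -> r <= b) -> is_lub S (supR S).
Proof.
  intros Hr0 Hb. unfold supR. apply epsilon_spec.
  apply upper_bound_thm; [exists b; exact Hb | exists r0; exact Hr0].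
Qed.

Lemma infR_is_glb S r0 b : S r0 -> (forall r, S r -> b <= r) -> is_glb S (infR S).
Proof.
  intros Hr0 Hb. unfold infR. apply epsilon_spec.
  destruct (upper_bound_thm (fun r => S (- r))) as [m [Hub Hleast]].
  - exists (- b). intros r Hr. specialize (Hb _ Hr). lra.
  - exists (- r0). rewrite Ropp_involutive. exact Hr0.
  - exists (- m). split.
    + intros r Hr. assert (- r <= m) by (apply Hub; rewrite Ropp_involutive; exact Hr). lra.
    + intros c Hc. assert (m <= - c); [|lra].
      apply Hleast. intros r Hr. specialize (Hc _ Hr). lra.
Qed.

Lemma lub_approx S m t : is_lub S m -> t < m -> exists r, S r /\ t < r.
Proof.
  intros [_ Hleast] Ht. apply NNPP. intro Hnone.
  assert (m <= t); [|lra].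
  apply Hleast. intros r Hr. apply Rnot_lt_le. intro. apply Hnone. eauto.
Qed.

Lemma glb_approx S m t : is_glb S m -> m < t -> exists r, S r /\ r < t.
Proof.
  intros [_ Hgreatest] Ht. apply NNPP. intro Hnone.
  assert (t <= m); [|lra].
  apply Hgreatest. intros r Hr. apply Rnot_lt_le. intro. apply Hnone. eauto.
Qed.

Definition sup_over {X : Type} (f : X -> R) : R := supR (fun r => exists z, r = f z).

Lemma sup_over_is_lub {X : Type} (f : X -> R) (b : R) (z0 : X) :
  (forall z, f z <= b) -> is_lub (fun r => exists z, r = f z) (sup_over f).
Proof. intro Hb. apply (supR_is_lub _ (f z0) b); [eauto | intros r [z ->]; apply Hb]. Qed.

Lemma le_sup_over {X : Type} (f : X -> R) (b : R) z :
  (forall z, f z <= b) -> f z <= sup_over f.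
Proof. intro Hb. apply (sup_over_is_lub f b z Hb). eauto. Qed.

Lemma sup_over_le {X : Type} (f : X -> R) (c : R) (z0 : X) :
  (forall z, f z <= c) -> sup_over f <= c.
Proof. intro Hc. apply (sup_over_is_lub f c z0 Hc). intros r [z ->]. apply Hc. Qed.

Lemma sup_over_gt {X : Type} (f : X -> R) (b t : R) (z0 : X) :
  (forall z, f z <= b) -> t < sup_over f -> exists z, t < f z.
Proof.
  intros Hb Ht. destruct (lub_approx _ _ _ (sup_over_is_lub f b z0 Hb) Ht) as [r [[z ->] Hr]].
  eauto.
Qed.

Lemma pow2_pos n : 0 < 2 ^ n.
Proof. apply pow_lt; lra. Qed.

Lemma INR_pow2 n : INR (2 ^ n) = 2 ^ n.
Proof. rewrite pow_INR. reflexivity. Qed.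

Lemma exists_pow2_lt c e : 0 < c -> 0 < e -> exists m : nat, c / 2 ^ m < e.
Proof.
  intros Hc He. destruct (pow_lt_1_zero (/ 2)) with (y := e / c) as [m Hm].
  { rewrite Rabs_pos_eq; lra. } { apply Rdiv_lt_0_compat; lra. }
  exists m. specialize (Hm m (le_n _)).
  rewrite Rabs_pos_eq, pow_inv in Hm by (apply pow_le; lra).
  pose proof (pow2_pos m).
  apply (Rmult_lt_compat_l c) in Hm; [|exact Hc].
  replace (c * (e / c)) with e in Hm by (field; lra). exact Hm.
Qed.

Definition dyadic (k n : nat) : R := INR k / 2 ^ n.

Lemma dyadic_one : dyadic 1 0 = 1.
Proof. unfold dyadic. simpl. lra. Qed.

Lemma dyadic_nonneg k n : 0 <= dyadic k n.
Proof.
  unfold dyadic, Rdiv. pose proof (pos_INR k). pose proof (pow2_pos n).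
  apply Rmult_le_pos; [lra | left; apply Rinv_0_lt_compat; lra].
Qed.

Lemma dyadic_le k n k' n' : dyadic k n <= dyadic k' n' <-> (k * 2 ^ n' <= k' * 2 ^ n)%nat.
Proof.
  unfold dyadic. pose proof (pow2_pos n). pose proof (pow2_pos n').
  assert (Hl : INR k * 2 ^ n' = INR k / 2 ^ n * (2 ^ n * 2 ^ n')) by (field; lra).
  assert (Hr : INR k' * 2 ^ n = INR k' / 2 ^ n' * (2 ^ n * 2 ^ n')) by (field; lra).
  split; intro Hle.
  - apply INR_le. rewrite 2!mult_INR, 2!INR_pow2, Hl, Hr.
    apply Rmult_le_compat_r; [nra | exact Hle].
  - apply le_INR in Hle. rewrite 2!mult_INR, 2!INR_pow2, Hl, Hr in Hle.
    apply Rmult_le_reg_r in Hle; [exact Hle | nra].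
Qed.

Lemma dyadic_le_one k n : (k <= 2 ^ n)%nat -> dyadic k n <= 1.
Proof. intro Hk. rewrite <- dyadic_one. apply dyadic_le. rewrite Nat.pow_0_r. lia. Qed.

Lemma dyadic_ceil k n m : (1 <= k <= 2 ^ n)%nat ->
  exists j, (1 <= j <= 2 ^ m)%nat /\ dyadic k n <= dyadic j m /\
            dyadic (S (S j)) m <= dyadic k n + 3 / 2 ^ m.
Proof.
  intro Hk.
  assert (HA : (0 < 2 ^ n)%nat) by (apply Nat.neq_0_lt_0, Nat.pow_nonzero; lia).
  assert (HB : (0 < 2 ^ m)%nat) by (apply Nat.neq_0_lt_0, Nat.pow_nonzero; lia).
  set (A := (2 ^ n)%nat) in *. set (B := (2 ^ m)%nat) in *.
  (* [j] below is the ceiling of [k * B / A]. *)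
  set (N := (k * B + A - 1)%nat).
  pose proof (Nat.div_mod N A ltac:(lia)). pose proof (Nat.mod_upper_bound N A ltac:(lia)).
  set (j := (N / A)%nat) in *.
  assert (Hj : (k * B <= j * A < k * B + A)%nat) by nia.
  exists j. split; [nia|]. split; [apply dyadic_le; lia|].
  destruct Hj as [_ Hj]. apply lt_INR in Hj. rewrite plus_INR, !mult_INR in Hj.
  unfold dyadic, A, B in *. rewrite !INR_pow2 in Hj.
  pose proof (pow2_pos n). pose proof (pow2_pos m).
  apply (Rmult_le_reg_r (2 ^ n * 2 ^ m)); [nra|].
  replace (INR (S (S j)) / 2 ^ m * (2 ^ n * 2 ^ m)) with ((INR j + 2) * 2 ^ n)
    by (rewrite !S_INR; field; lra).
  replace ((INR k / 2 ^ n + 3 / 2 ^ m) * (2 ^ n * 2 ^ m)) with (INR k * 2 ^ m + 3 * 2 ^ n)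
    by (field; lra).
  nra.
Qed.

Lemma dyadic_between s t : 0 <= s -> s < t -> t <= 1 ->
  exists k n, (1 <= k <= 2 ^ n)%nat /\ s < dyadic k n < t.
Proof.
  intros Hs Hst Ht. destruct (exists_pow2_lt 1 (t - s)) as [m Hm]; [lra|lra|].
  pose proof (pow2_pos m) as Hpow.
  assert (Hgap : 1 < (t - s) * 2 ^ m).
  { apply (Rmult_lt_compat_r (2 ^ m)) in Hm; [|exact Hpow].
    replace (1 / 2 ^ m * 2 ^ m) with 1 in Hm by (field; lra). exact Hm. }
  destruct (archimed (s * 2 ^ m)) as [Hup1 Hup2].
  assert (Hpos : (0 < up (s * 2 ^ m))%Z) by (apply lt_0_IZR; nra).
  set (k := Z.to_nat (up (s * 2 ^ m))).
  assert (Hk : INR k = IZR (up (s * 2 ^ m))).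
  { unfold k. rewrite INR_IZR_INZ, Z2Nat.id; [reflexivity | lia]. }
  assert (Hkm : dyadic k m * 2 ^ m = INR k) by (unfold dyadic; field; lra).
  assert (Hlt : dyadic k m < t) by (apply (Rmult_lt_reg_r (2 ^ m)); nra).
  exists k, m. split; [split|split].
  - apply INR_le. rewrite Hk. apply IZR_le. lia.
  - assert (Hle : dyadic k m <= dyadic 1 0) by (rewrite dyadic_one; lra).
    apply dyadic_le in Hle. rewrite Nat.pow_0_r in Hle. lia.
  - apply (Rmult_lt_reg_r (2 ^ m)); nra.
  - exact Hlt.
Qed.

Section DyadicEntourages.
Context {X : Type}.
Variable V : nat -> rel X.

(* [dyadic_ent k n] composes the [V i] along the binary expansion of [k / 2^n]
   (with [V 0] for the digit in front of the point), so it only depends on the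
   value of the fraction: [dyadic_ent (2 * j) (S n) = dyadic_ent j n]. *)
Fixpoint dyadic_ent (k n : nat) : rel X :=
  match n with
  | O => if Nat.eqb k 0 then (fun a b => a = b) else V O
  | S n' => if Nat.even k then dyadic_ent (Nat.div2 k) n'
            else if Nat.eqb (Nat.div2 k) 0 then V (S n')
                 else rcomp (dyadic_ent (Nat.div2 k) n') (V (S n'))
  end.

Lemma dyadic_ent_double j n : dyadic_ent (2 * j) (S n) = dyadic_ent j n.
Proof. cbn [dyadic_ent]. rewrite Nat.even_even, Nat.div2_double. reflexivity. Qed.

Lemma dyadic_ent_double_succ j n : dyadic_ent (S (2 * j)) (S n) =
  if Nat.eqb j 0 then V (S n) else rcomp (dyadic_ent j n) (V (S n)).
Proof.
  cbn [dyadic_ent]. rewrite Nat.even_succ, Nat.odd_mul, Nat.div2_succ_double.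
  reflexivity.
Qed.

Lemma dyadic_ent_0 n : dyadic_ent 0 n = (fun a b => a = b).
Proof.
  induction n as [|n IHn]; [reflexivity|].
  rewrite <- (Nat.mul_0_r 2), dyadic_ent_double. exact IHn.
Qed.

Lemma nat_half k : exists j, k = (2 * j)%nat \/ k = S (2 * j).
Proof. destruct (Nat.Even_or_Odd k) as [[j Hj]|[j Hj]]; exists j; lia. Qed.

Lemma dyadic_ent_in (BB : rel X -> Prop) : multiplicative BB -> (forall n, BB (V n)) ->
  forall k n, (1 <= k)%nat -> BB (dyadic_ent k n).
Proof.
  intros Hmult HV k n. revert k. induction n as [|n IHn]; intros k Hk.
  - cbn. destruct (Nat.eqb_spec k 0); [lia | apply HV].
  - destruct (nat_half k) as [j [-> | ->]].
    + rewrite dyadic_ent_double. apply IHn. lia.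
    + rewrite dyadic_ent_double_succ. destruct (Nat.eqb_spec j 0); [apply HV|].
      apply Hmult; [apply IHn; lia | apply HV].
Qed.

Hypothesis V_refl : forall n x, V n x x.
Hypothesis V_half : forall n, rsubset (rcomp (V (S n)) (V (S n))) (V n).

Lemma dyadic_ent_refl k n x : dyadic_ent k n x x.
Proof.
  revert k. induction n as [|n IHn]; intro k.
  - cbn. destruct (Nat.eqb k 0); [reflexivity | apply V_refl].
  - destruct (nat_half k) as [j [-> | ->]].
    + rewrite dyadic_ent_double. apply IHn.
    + rewrite dyadic_ent_double_succ. destruct (Nat.eqb j 0); [apply V_refl|].
      exists x. split; [apply IHn | apply V_refl].
Qed.

(* Adding [2^-n] to a binary fraction propagates a carry, absorbed by [V_half]. *)
Lemma dyadic_ent_succ n : forall k, (k < 2 ^ n)%nat ->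
  rsubset (rcomp (dyadic_ent k n) (V n)) (dyadic_ent (S k) n).
Proof.
  induction n as [|n IHn]; intros k Hk.
  - cbn in Hk. replace k with 0%nat by lia. intros a b [c [-> Hcb]]. exact Hcb.
  - destruct (nat_half k) as [j [-> | ->]].
    + rewrite dyadic_ent_double, dyadic_ent_double_succ.
      destruct (Nat.eqb_spec j 0) as [->|]; [|intros a b Hab; exact Hab].
      rewrite dyadic_ent_0. intros a b [c [-> Hcb]]. exact Hcb.
    + replace (S (S (2 * j))) with (2 * S j)%nat by lia.
      rewrite dyadic_ent_double, dyadic_ent_double_succ.
      assert (Hj : (j < 2 ^ n)%nat) by (cbn in Hk; lia).
      destruct (Nat.eqb_spec j 0) as [->|].
      * intros a b [c [Hac Hcb]]. apply (IHn 0%nat Hj). exists a.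
        rewrite dyadic_ent_0. split; [reflexivity|]. apply V_half. exists c; auto.
      * intros a b [c [[d [Had Hdc]] Hcb]]. apply (IHn j Hj). exists d.
        split; [exact Had|]. apply V_half. exists c; auto.
Qed.

Lemma dyadic_ent_mono n k k' : (k <= k' <= 2 ^ n)%nat ->
  rsubset (dyadic_ent k n) (dyadic_ent k' n).
Proof.
  intros [Hkk' Hk']. induction Hkk' as [|k' Hkk' IH]; intros a b Hab; [exact Hab|].
  apply (dyadic_ent_succ n k'); [lia|]. exists b. split; [|apply V_refl].
  apply IH; [lia | exact Hab].
Qed.

Lemma dyadic_ent_scale k n j : dyadic_ent k n = dyadic_ent (k * 2 ^ j) (n + j).
Proof.
  induction j as [|j IHj]; [rewrite Nat.mul_1_r, Nat.add_0_r; reflexivity|].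
  rewrite IHj, Nat.add_succ_r, Nat.pow_succ_r', <- dyadic_ent_double. f_equal. lia.
Qed.

Lemma dyadic_ent_incl k n k' n' : dyadic k n <= dyadic k' n' -> (k' <= 2 ^ n')%nat ->
  rsubset (dyadic_ent k n) (dyadic_ent k' n').
Proof.
  intros Hle Hk'. apply dyadic_le in Hle.
  rewrite (dyadic_ent_scale k n n'), (dyadic_ent_scale k' n' n), (Nat.add_comm n' n).
  apply dyadic_ent_mono. rewrite Nat.pow_add_r. split; [exact Hle | nia].
Qed.

End DyadicEntourages.

Section Closure.
Context {X : Type}.
Variable UU : rel X -> Prop.

Lemma uclosure_incl (A : X -> Prop) x : A x -> uclosure UU A x.
Proof. intros Hx W _ HW. exists x. auto. Qed.

Lemma uclosure_mono (A B : X -> Prop) : subset A B -> subset (uclosure UU A) (uclosure UU B).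
Proof.
  intros HAB x Hx W HW HWx. destruct (Hx W HW HWx) as [y [HWy HAy]]. exists y. auto.
Qed.

Lemma uclosure_idem (A : X -> Prop) : subset (uclosure UU (uclosure UU A)) (uclosure UU A).
Proof.
  intros x Hx W HW HWx. destruct (Hx W HW HWx) as [y [HWy Hy]]. exact (Hy W HW HWy).
Qed.

Lemma uclosure_ball_mono x (U V : rel X) : rsubset U V ->
  subset (uclosure UU (ball x U)) (uclosure UU (ball x V)).
Proof. intro HUV. apply uclosure_mono. intro y. apply HUV. Qed.

Lemma uclosure_inhabited (A : X -> Prop) x (U : rel X) : UU U -> uclosure UU A x ->
  exists a, A a.
Proof.
  intros HU Hx. destruct (Hx (fun _ => True)) as [a [_ Ha]]; [|exact I|eauto].
  intros y _. exists U. split; [exact HU | intros z _; exact I].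
Qed.

Lemma not_uclosure (A : X -> Prop) y : ~ uclosure UU A y ->
  exists W, UU W /\ forall w, W y w -> ~ A w.
Proof.
  intro Hy. apply not_all_ex_not in Hy as [O HO].
  apply imply_to_and in HO as [HOopen HO]. apply imply_to_and in HO as [HOy HO].
  destruct (HOopen y HOy) as [W [HW HWO]]. exists W. split; [exact HW|].
  intros w Hw HAw. apply HO. exists w. split; [apply HWO, Hw | exact HAw].
Qed.

Lemma lsc_of_closed_sublevels (f : X -> R) :
  (forall s, subset (uclosure UU (fun y => f y <= s)) (fun y => f y <= s)) ->
  forall y0 e, 0 < e -> exists W, UU W /\ forall y, W y0 y -> f y0 - e < f y.
Proof.
  intros Hclosed y0 e He.
  destruct (not_uclosure (fun y => f y <= f y0 - e) y0) as [W [HW Hfar]].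
  { intro Hcl. specialize (Hclosed _ _ Hcl). cbv beta in Hclosed. lra. }
  exists W. split; [exact HW|]. intros y Hy. apply Rnot_le_lt, Hfar, Hy.
Qed.

Lemma ucontinuous_of_nbhs (f : X -> R) :
  (forall y0 e, 0 < e -> exists W, UU W /\ forall y, W y0 y -> Rabs (f y - f y0) < e) ->
  ucontinuous UU f.
Proof.
  intros Hf O HO y0 Hy0. destruct (HO _ Hy0) as [e [He HOe]].
  destruct (Hf y0 e He) as [W [HW HWe]]. exists W. split; [exact HW|].
  intros y Hy. apply HOe, HWe, Hy.
Qed.

End Closure.

Section Gauge.
Context {X : Type}.
Variables (UU BB : rel X -> Prop) (V : nat -> rel X).
Hypothesis BB_UU : forall W, BB W -> UU W.
Hypothesis BB_mult : multiplicative BB.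
Hypothesis BB_rotund : delta_rotund_base UU BB.
Hypothesis V_BB : forall n, BB (V n).
Hypothesis V_refl : forall n x, V n x x.
Hypothesis V_half : forall n, rsubset (rcomp (V (S n)) (V (S n))) (V n).

Definition radius (x y : X) (r : R) : Prop :=
  r = 1 \/ exists k n, (1 <= k <= 2 ^ n)%nat /\ r = dyadic k n /\
                       uclosure UU (ball x (dyadic_ent V k n)) y.

Definition gauge (x y : X) : R := infR (radius x y).

Lemma radius_bounds x y r : radius x y r -> 0 <= r <= 1.
Proof.
  intros [-> | [k [n [Hk [-> _]]]]]; [lra|].
  split; [apply dyadic_nonneg | apply dyadic_le_one; lia].
Qed.

Lemma gauge_is_glb x y : is_glb (radius x y) (gauge x y).
Proof.
  apply (infR_is_glb _ 1 0); [left; reflexivity|].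
  intros r Hr. apply (radius_bounds x y r Hr).
Qed.

Lemma gauge_unit x y : 0 <= gauge x y <= 1.
Proof.
  destruct (gauge_is_glb x y) as [Hlow Hgreatest]. split.
  - apply Hgreatest. intros r Hr. apply (radius_bounds x y r Hr).
  - apply Hlow. left. reflexivity.
Qed.

Lemma gauge_le_dyadic x y k n : (1 <= k <= 2 ^ n)%nat ->
  uclosure UU (ball x (dyadic_ent V k n)) y -> gauge x y <= dyadic k n.
Proof. intros Hk Hy. apply (gauge_is_glb x y). right. exists k, n. auto. Qed.

Lemma gauge_lt_dyadic x y k n : (1 <= k <= 2 ^ n)%nat -> gauge x y < dyadic k n ->
  uclosure UU (ball x (dyadic_ent V k n)) y.
Proof.
  intros Hk Hlt. destruct (glb_approx _ _ _ (gauge_is_glb x y) Hlt) as [r [Hr Hrk]].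
  destruct Hr as [-> | [k' [n' [_ [-> Hy]]]]].
  - pose proof (dyadic_le_one k n (proj2 Hk)). lra.
  - revert Hy. apply uclosure_ball_mono, dyadic_ent_incl; [exact V_refl | exact V_half | lra | lia].
Qed.

Lemma gauge_refl x : gauge x x = 0.
Proof.
  apply Rle_antisym; [|apply gauge_unit]. apply Rnot_lt_le. intro Hpos.
  destruct (exists_pow2_lt 1 (gauge x x)) as [n Hn]; [lra | exact Hpos|].
  assert (gauge x x <= dyadic 1 n); [|unfold dyadic in *; simpl INR in *; lra].
  apply gauge_le_dyadic.
  - split; [lia|]. apply Nat.neq_0_lt_0, Nat.pow_nonzero. lia.
  - apply uclosure_incl, dyadic_ent_refl, V_refl.
Qed.

(* Delta-rotundity moves a closure through one more [V m]; rounding the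
   radius up to the grid [2^-m] and paying for the extra base entourage [W]
   of the rotundity condition costs three steps. *)
Lemma gauge_shift m a b z : V m a b -> gauge z b <= gauge z a + 3 / 2 ^ m.
Proof.
  intro Hab. pose proof (pow2_pos m).
  assert (Hlow : forall r, radius z a r -> gauge z b - 3 / 2 ^ m <= r).
  { intros r [-> | [k [n [Hk [-> Ha]]]]].
    - pose proof (gauge_unit z b). assert (0 < 3 / 2 ^ m) by (apply Rdiv_lt_0_compat; lra).
      lra.
    - destruct (dyadic_ceil k n m Hk) as [j [Hj [Hkj Hj3]]].
      enough (gauge z b <= dyadic (S (S j)) m) by lra.
      destruct (le_lt_dec (S (S j)) (2 ^ m)) as [Hj2 | Hj2].
      + apply gauge_le_dyadic; [lia|].
        assert (Ha' : uclosure UU (ball z (dyadic_ent V j m)) a).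
        { revert Ha. apply uclosure_ball_mono, dyadic_ent_incl; auto. lia. }
        assert (Hb : uclosure UU (ball z (rcomp (rcomp (dyadic_ent V j m) (V m)) (V m))) b).
        { apply (BB_rotund z (V m) (dyadic_ent V j m) (V m)); auto.
          - apply dyadic_ent_in; auto. lia.
          - exists a. auto. }
        revert Hb. apply uclosure_ball_mono. intros u w [t [Hut Htw]].
        apply (dyadic_ent_succ V V_half m (S j)); [lia|]. exists t. split; [|exact Htw].
        apply (dyadic_ent_succ V V_half m j); [lia | exact Hut].
      + pose proof (gauge_unit z b).
        assert (dyadic 1 0 <= dyadic (S (S j)) m); [|rewrite dyadic_one in *; lra].
        apply dyadic_le. rewrite Nat.pow_0_r. lia. }
  pose proof (proj2 (gauge_is_glb z a) _ Hlow). lra.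
Qed.

Lemma gauge_sublevel_closed z s :
  subset (uclosure UU (fun y => gauge z y <= s)) (fun y => gauge z y <= s).
Proof.
  intros y0 Hy0. apply Rnot_lt_le. intro Hlt.
  destruct (uclosure_inhabited UU _ _ (V O) (BB_UU _ (V_BB O)) Hy0) as [a Ha].
  pose proof (gauge_unit z a). pose proof (gauge_unit z y0).
  destruct (dyadic_between s (gauge z y0)) as [k [n [Hk [Hsk Hky]]]]; try lra.
  assert (Hcl : uclosure UU (ball z (dyadic_ent V k n)) y0).
  { apply uclosure_idem. revert Hy0. apply uclosure_mono. intros y Hy.
    apply gauge_lt_dyadic; [exact Hk | cbv beta in Hy; lra]. }
  pose proof (gauge_le_dyadic z y0 k n Hk Hcl). lra.
Qed.

Lemma uopen_gauge_lt x t : uopen UU (fun y => gauge x y < t).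
Proof.
  intros y Hy. destruct (exists_pow2_lt 3 (t - gauge x y)) as [m Hm]; [lra | lra |].
  exists (V m). split; [apply BB_UU, V_BB|].
  intros w Hw. pose proof (gauge_shift m y w x Hw). cbv beta. lra.
Qed.

Lemma gauge_lt1_interior (U : rel X) x y : rsubset (V O) U -> gauge x y < 1 ->
  uinterior UU (uclosure UU (ball x U)) y.
Proof.
  intros HVU Hy. exists (fun w => gauge x w < 1).
  split; [apply uopen_gauge_lt|]. split; [exact Hy|].
  intros w Hw. apply (uclosure_ball_mono UU x (V O)); [exact HVU|].
  change (V O) with (dyadic_ent V 1 0).
  apply gauge_lt_dyadic; [cbn; lia | rewrite dyadic_one; exact Hw].
Qed.

End Gauge.

Record dyadic_gauge {X : Type} (UU : rel X -> Prop) (U : rel X) (V : nat -> rel X)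
    (g : X -> X -> R) : Prop := {
  dg_entourage : forall n, UU (V n);
  dg_unit : forall x y, 0 <= g x y <= 1;
  dg_refl : forall x, g x x = 0;
  dg_shift : forall m a b z, V m a b -> g z b <= g z a + 3 / 2 ^ m;
  dg_lsc : forall z y0 e, 0 < e -> exists W, UU W /\ forall y, W y0 y -> g z y0 - e < g z y;
  dg_interior : forall x y, g x y < 1 -> uinterior UU (uclosure UU (ball x U)) y
}.

Lemma exists_halving_sequence {X : Type} (BB : rel X -> Prop) (W0 : rel X) : BB W0 ->
  (forall W, BB W -> exists W', BB W' /\ rsubset (rcomp W' W') W) ->
  exists V : nat -> rel X, V O = W0 /\
    forall n, BB (V n) /\ rsubset (rcomp (V (S n)) (V (S n))) (V n).
Proof.
  intros HW0 Hhalf.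
  pose (half W := epsilon (inhabits W0) (fun W' => BB W' /\ rsubset (rcomp W' W') W)).
  assert (Hhalf_spec : forall W, BB W -> BB (half W) /\ rsubset (rcomp (half W) (half W)) W).
  { intros W HW. exact (epsilon_spec _ _ (Hhalf W HW)). }
  assert (HBB : forall n, BB (Nat.iter n half W0)).
  { induction n as [|n IHn]; [exact HW0 | apply (Hhalf_spec _ IHn)]. }
  exists (fun n => Nat.iter n half W0). split; [reflexivity|].
  intro n. split; [apply HBB | apply (Hhalf_spec _ (HBB n))].
Qed.

Lemma exists_dyadic_gauge {X : Type} (UU : rel X -> Prop) (U : rel X) :
  is_quasi_uniformity UU -> delta_rotund UU -> UU U ->
  exists V g, dyadic_gauge UU U V g.
Proof.
  intros [UU_refl [_ [_ UU_half]]] [BB [[BB_UU BB_base] [BB_mult BB_rotund]]] HU.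
  destruct (BB_base U HU) as [W0 [HW0 HW0U]].
  destruct (exists_halving_sequence BB W0 HW0) as [V [HV0 HV]].
  { intros W HW. destruct (UU_half W (BB_UU W HW)) as [W1 [HW1 HW1W]].
    destruct (BB_base W1 HW1) as [W' [HW' HW'W1]]. exists W'. split; [exact HW'|].
    intros a c [b [Hab Hbc]]. apply HW1W. exists b. auto. }
  assert (V_BB : forall n, BB (V n)) by (intro n; apply HV).
  assert (V_refl : forall n x, V n x x) by (intros n x; apply UU_refl, BB_UU, V_BB).
  assert (V_half : forall n, rsubset (rcomp (V (S n)) (V (S n))) (V n)) by (intro n; apply HV).
  exists V, (gauge UU V). constructor.
  - intro n. apply BB_UU, V_BB.
  - apply gauge_unit.
  - apply gauge_refl; assumption.
  - intros m a b z. apply (gauge_shift UU BB); assumption.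
  - intro z. apply lsc_of_closed_sublevels. intro s.
    apply (gauge_sublevel_closed UU BB); assumption.
  - intros x y. apply (gauge_lt1_interior UU BB); try assumption. rewrite HV0. exact HW0U.
Qed.

(* [phi] is [Rmax 0] for the quasi-pseudometric and [Rabs] for the pseudometric. *)
Definition gauge_dist {X : Type} (phi : R -> R) (g : X -> X -> R) (x y : X) : R :=
  sup_over (fun z => phi (g z y - g z x)).

Section GaugeDist.
Context {X : Type}.
Variables (phi : R -> R) (g : X -> X -> R).
Hypothesis phi_between : forall t, Rmax 0 t <= phi t <= Rabs t.
Hypothesis phi_subadd : forall s t, phi (s + t) <= phi s + phi t.
Hypothesis g_unit : forall x y, 0 <= g x y <= 1.

Lemma gauge_term_le1 x y z : phi (g z y - g z x) <= 1.
Proof.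
  pose proof (phi_between (g z y - g z x)). pose proof (g_unit z y). pose proof (g_unit z x).
  assert (Rabs (g z y - g z x) <= 1) by (apply Rabs_le; lra). lra.
Qed.

Lemma le_gauge_dist x y z : phi (g z y - g z x) <= gauge_dist phi g x y.
Proof.
  apply (le_sup_over (fun z => phi (g z y - g z x)) 1). intro. apply gauge_term_le1.
Qed.

Lemma gauge_dist_le x y c : (forall z, phi (g z y - g z x) <= c) -> gauge_dist phi g x y <= c.
Proof. apply (sup_over_le (fun z => phi (g z y - g z x)) c x). Qed.

Lemma gauge_dist_gt x y t : t < gauge_dist phi g x y -> exists z, t < phi (g z y - g z x).
Proof.
  apply (sup_over_gt (fun z => phi (g z y - g z x)) 1 t x). intro. apply gauge_term_le1.
Qed.

Lemma gauge_dist_unit : unit_valued (gauge_dist phi g).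
Proof.
  intros x y. split.
  - pose proof (le_gauge_dist x y x). pose proof (phi_between (g x y - g x x)).
    pose proof (Rmax_l 0 (g x y - g x x)). lra.
  - apply gauge_dist_le. intro z. apply gauge_term_le1.
Qed.

Lemma gauge_dist_quasi : quasi_pseudometric (gauge_dist phi g).
Proof.
  split.
  - intro x. apply Rle_antisym.
    + apply gauge_dist_le. intro z. rewrite Rminus_diag.
      pose proof (phi_between 0). rewrite Rabs_R0 in *. lra.
    + apply gauge_dist_unit.
  - intros x y w. apply gauge_dist_le. intro z.
    replace (g z w - g z x) with ((g z y - g z x) + (g z w - g z y)) by ring.
    pose proof (le_gauge_dist x y z). pose proof (le_gauge_dist y w z).
    pose proof (phi_subadd (g z y - g z x) (g z w - g z y)). lra.
Qed.

Lemma gauge_le_gauge_dist x y : g x x = 0 -> g x y <= gauge_dist phi g x y.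
Proof.
  intro Hx. pose proof (le_gauge_dist x y x). pose proof (phi_between (g x y - g x x)).
  pose proof (Rmax_r 0 (g x y - g x x)). rewrite Hx in *. lra.
Qed.

End GaugeDist.

Lemma pball1_gauge_dist {X : Type} (UU : rel X -> Prop) U V g (phi : R -> R) :
  (forall t, Rmax 0 t <= phi t <= Rabs t) -> dyadic_gauge UU U V g ->
  forall x, subset (pball1 (gauge_dist phi g) x) (uinterior UU (uclosure UU (ball x U))).
Proof.
  intros Hphi Hg x y Hy. apply (dg_interior _ _ _ _ Hg).
  pose proof (gauge_le_gauge_dist phi g Hphi (dg_unit _ _ _ _ Hg) x y (dg_refl _ _ _ _ Hg x)).
  unfold pball1 in Hy. lra.
Qed.

Lemma uniform_premetric_of_bounds {X : Type} (UU : rel X -> Prop) (p : X -> X -> R) :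
  is_quasi_uniformity UU ->
  (forall eps, 0 < eps -> exists W, UU W /\ forall a b, W a b -> p a b < eps) ->
  uniform_premetric UU p.
Proof.
  intros [_ [UU_up _]] Hp eps Heps. destruct (Hp eps Heps) as [W [HW HWp]].
  apply (UU_up W); [exact HW | exact HWp].
Qed.

Lemma right_continuous_of_lsc {X : Type} (UU : rel X -> Prop) (p : X -> X -> R) :
  is_quasi_uniformity UU -> quasi_pseudometric p -> uniform_premetric UU p ->
  (forall x y0 e, 0 < e -> exists W, UU W /\ forall y, W y0 y -> p x y0 - e < p x y) ->
  right_continuous UU p.
Proof.
  intros [_ [_ [UU_cap _]]] [_ Htri] Hunif Hlsc x. apply ucontinuous_of_nbhs.
  intros y0 e He. destruct (Hlsc x y0 e He) as [W1 [HW1 Hlow]].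
  destruct (UU_cap _ _ HW1 (Hunif e He)) as [W [HW [HWW1 HWp]]].
  exists W. split; [exact HW|]. intros y Hy.
  pose proof (Hlow y (HWW1 _ _ Hy)). pose proof (HWp _ _ Hy). pose proof (Htri x y0 y).
  cbv beta in *. apply Rabs_def1; lra.
Qed.

Lemma pseudometric_lsc {X : Type} (UU : rel X -> Prop) (p : X -> X -> R) :
  pseudometric p -> uniform_premetric UU p ->
  forall x y0 e, 0 < e -> exists W, UU W /\ forall y, W y0 y -> p x y0 - e < p x y.
Proof.
  intros [[_ Htri] Hsym] Hunif x y0 e He. exists (fun a b => p a b < e).
  split; [exact (Hunif e He)|]. intros y Hy.
  pose proof (Htri x y y0). rewrite (Hsym y y0) in *. lra.
Qed.

Lemma Rmax0_subadd s t : Rmax 0 (s + t) <= Rmax 0 s + Rmax 0 t.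
Proof. unfold Rmax. repeat destruct Rle_dec; lra. Qed.

Lemma Rmax0_le_Rabs t : Rmax 0 t <= Rabs t.
Proof. apply Rmax_lub; [apply Rabs_pos | apply Rle_abs]. Qed.

Lemma quasi_metric_of_gauge {X : Type} (UU : rel X -> Prop) U V g :
  is_quasi_uniformity UU -> dyadic_gauge UU U V g ->
  exists p : X -> X -> R,
    unit_valued p /\ quasi_pseudometric p /\ uniform_premetric UU p /\
    right_continuous UU p /\
    forall x, subset (pball1 p x) (uinterior UU (uclosure UU (ball x U))).
Proof.
  intros HQ Hg. pose proof Hg as [HV g_unit _ g_shift g_lsc _].
  assert (Hphi : forall t, Rmax 0 t <= Rmax 0 t <= Rabs t).
  { intro t. split; [apply Rle_refl | apply Rmax0_le_Rabs]. }
  assert (Hquasi : quasi_pseudometric (gauge_dist (Rmax 0) g)).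
  { apply gauge_dist_quasi; [exact Hphi | exact Rmax0_subadd | exact g_unit]. }
  assert (Hunif : uniform_premetric UU (gauge_dist (Rmax 0) g)).
  { apply uniform_premetric_of_bounds; [exact HQ|]. intros eps Heps.
    destruct (exists_pow2_lt 3 eps) as [m Hm]; [lra | exact Heps|].
    exists (V m). split; [apply HV|]. intros a b Hab.
    enough (gauge_dist (Rmax 0) g a b <= 3 / 2 ^ m) by lra.
    apply gauge_dist_le. intro z. apply Rmax_lub.
    - apply Rlt_le, Rdiv_lt_0_compat; [lra | apply pow2_pos].
    - pose proof (g_shift m a b z Hab). lra. }
  exists (gauge_dist (Rmax 0) g).
  split; [exact (gauge_dist_unit _ _ Hphi g_unit)|]. split; [exact Hquasi|].
  split; [exact Hunif|]. split; [|exact (pball1_gauge_dist UU U V g _ Hphi Hg)].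
  apply right_continuous_of_lsc; [exact HQ | exact Hquasi | exact Hunif|].
  intros x y0 e He.
  destruct (gauge_dist_gt _ _ Hphi g_unit x y0 (gauge_dist (Rmax 0) g x y0 - e / 2))
    as [z Hz]; [lra|].
  destruct (g_lsc z y0 (e / 2)) as [W [HW Hlow]]; [lra|].
  exists W. split; [exact HW|]. intros y Hy.
  pose proof (Hlow y Hy) as Hzy. pose proof (le_gauge_dist _ _ Hphi g_unit x y z) as Hle.
  revert Hz Hle. unfold Rmax. repeat destruct Rle_dec; intros; lra.
Qed.

Lemma pseudometric_of_gauge {X : Type} (UU : rel X -> Prop) U V g :
  is_uniformity UU -> dyadic_gauge UU U V g ->
  exists p : X -> X -> R,
    unit_valued p /\ pseudometric p /\ uniform_premetric UU p /\
    right_continuous UU p /\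
    forall x, subset (pball1 p x) (uinterior UU (uclosure UU (ball x U))).
Proof.
  intros [HQ UU_inv] Hg. pose proof Hg as [HV g_unit _ g_shift _ _].
  assert (Hphi : forall t, Rmax 0 t <= Rabs t <= Rabs t).
  { intro t. split; [apply Rmax0_le_Rabs | apply Rle_refl]. }
  assert (Hsym : forall x y, gauge_dist Rabs g x y = gauge_dist Rabs g y x).
  { assert (Hle : forall x y, gauge_dist Rabs g x y <= gauge_dist Rabs g y x).
    { intros x y. apply gauge_dist_le. intro z. rewrite Rabs_minus_sym.
      apply le_gauge_dist; assumption. }
    intros x y. apply Rle_antisym; apply Hle. }
  assert (Hpseudo : pseudometric (gauge_dist Rabs g)).
  { split; [apply gauge_dist_quasi; [exact Hphi | exact Rabs_triang | exact g_unit]|].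
    exact Hsym. }
  assert (Hunif : uniform_premetric UU (gauge_dist Rabs g)).
  { apply uniform_premetric_of_bounds; [exact HQ|]. intros eps Heps.
    destruct (exists_pow2_lt 3 eps) as [m Hm]; [lra | exact Heps|].
    destruct HQ as [_ [_ [UU_cap _]]].
    destruct (UU_cap (V m) (rinv (V m)) (HV m) (UU_inv _ (HV m))) as [W [HW [HWV HWVinv]]].
    exists W. split; [exact HW|]. intros a b Hab.
    enough (gauge_dist Rabs g a b <= 3 / 2 ^ m) by lra.
    apply gauge_dist_le. intro z. apply Rabs_le.
    pose proof (g_shift m a b z (HWV _ _ Hab)). pose proof (g_shift m b a z (HWVinv _ _ Hab)).
    lra. }
  exists (gauge_dist Rabs g).
  split; [exact (gauge_dist_unit _ _ Hphi g_unit)|]. split; [exact Hpseudo|].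
  split; [exact Hunif|]. split; [|exact (pball1_gauge_dist UU U V g _ Hphi Hg)].
  apply right_continuous_of_lsc; [exact HQ | apply Hpseudo | exact Hunif|].
  apply pseudometric_lsc; assumption.
Qed.

Theorem corollary2p14 :
  (forall (X : Type) (UU : rel X -> Prop),
     is_quasi_uniformity UU -> delta_rotund UU ->
     forall U, UU U ->
     exists p : X -> X -> R,
       unit_valued p /\ quasi_pseudometric p /\ uniform_premetric UU p /\
       right_continuous UU p /\
       forall x, subset (pball1 p x) (uinterior UU (uclosure UU (ball x U))))
  /\
  (forall (X : Type) (UU : rel X -> Prop),
     is_uniformity UU -> delta_rotund UU ->
     forall U, UU U ->
     exists p : X -> X -> R,
       unit_valued p /\ pseudometric p /\ uniform_premetric UU p /\
       right_continuous UU p /\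
       forall x, subset (pball1 p x) (uinterior UU (uclosure UU (ball x U)))).
Proof.
  split.
  - intros X UU HQ HD U HU.
    destruct (exists_dyadic_gauge UU U HQ HD HU) as [V [g Hg]].
    exact (quasi_metric_of_gauge UU U V g HQ Hg).
  - intros X UU HQ HD U HU.
    destruct (exists_dyadic_gauge UU U (proj1 HQ) HD HU) as [V [g Hg]].
    exact (pseudometric_of_gauge UU U V g HQ Hg).
Qed.
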